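(* Let $\mathcal{M}$ be a finite model of the simply typed $\lambda$-calculus, let $\tau$ be a type and $\alpha=\omega_\tau$. For every $c\in\mathcal{M}_{\omega_\tau}$, the function $h:\mathbb{N}^3\to\mathbb{N}$ given by $h(m,n_1,n_2)=n_1$ if $[\![\rho(m)^{\alpha}]\!]_{\mathcal{M}}=c$ and $h(m,n_1,n_2)=n_2$ otherwise, is strictly definable.
   Context: We work in the simply typed $\lambda$-calculus (type assignment to untyped $\lambda$-terms) with a single base type $o$. For a type $\tau$, $\omega_\tau=(\tau\to\tau)\to\tau\to\tau$. The Church numeral of $n$ is $\rho(n)=\lambda f x.f^{n}x$, and $\rho(n)^{\alpha}$ denotes it typed with type $\alpha$. A finite model $\mathcal{M}$ assigns to each type $\sigma$ a finite set $\mathcal{M}_\sigma$ (e.g. the full set-theoretic type hierarchy over a finite base set), and $[\![M]\!]_{\mathcal{M}}\in\mathcal{M}_\sigma$ denotes the interpretation of a closed term $M$ of type $\sigma$. A function $f:\mathbb{N}^k\to\mathbb{N}$ is strictly definable if there exist a type $\sigma$ and a term $E$ with $\vdash E:\omega_\sigma\to\cdots\to\omega_\sigma\to\omega_\sigma$ ($k$ arguments) such that $E\,\rho(n_1)\cdots\rho(n_k)=_{\beta\eta}\rho(f(n_1,\dots,n_k))$ for all $n_1,\dots,n_k$. *)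

From Stdlib Require Import Relations.
From mathcomp Require Import all_boot.

Set Implicit Arguments.
Unset Strict Implicit.
Unset Printing Implicit Defensive.

Inductive ty : Type := O | Arr of ty & ty.

Definition omega (t : ty) : ty := Arr (Arr t t) (Arr t t).

(** * Untyped lambda terms (de Bruijn indices) *)
Inductive tm : Type := Var of nat | App of tm & tm | Lam of tm.

Fixpoint lift (d k : nat) (t : tm) : tm :=
  match t with
  | Var n => if k <= n then Var (n + d) else Var n
  | App t1 t2 => App (lift d k t1) (lift d k t2)
  | Lam t1 => Lam (lift d k.+1 t1)
  end.

Fixpoint subst (k : nat) (u : tm) (t : tm) : tm :=
  match t with
  | Var n => if n < k then Var n else if n == k then lift k 0 u else Var n.-1
  | App t1 t2 => App (subst k u t1) (subst k u t2)
  | Lam t1 => Lam (subst k.+1 u t1)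
  end.

Inductive step : tm -> tm -> Prop :=
  | step_beta t u : step (App (Lam t) u) (subst 0 u t)
  | step_eta t : step (Lam (App (lift 1 0 t) (Var 0))) t
  | step_appl t t' u : step t t' -> step (App t u) (App t' u)
  | step_appr t u u' : step u u' -> step (App t u) (App t u')
  | step_lam t t' : step t t' -> step (Lam t) (Lam t').

Definition betaeta : tm -> tm -> Prop := clos_refl_sym_trans tm step.

Definition church (n : nat) : tm := Lam (Lam (iter n (App (Var 1)) (Var 0))).

Inductive typing : seq ty -> tm -> ty -> Prop :=
  | ty_var G n : n < size G -> typing G (Var n) (nth O G n)
  | ty_app G t u a b : typing G t (Arr a b) -> typing G u a -> typing G (App t u) b
  | ty_lam G t a b : typing (a :: G) t b -> typing G (Lam t) (Arr a b).

Definition arrows (k : nat) (s : ty) : ty := iter k (Arr (omega s)) (omega s).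
Definition apps (E : tm) (ns : seq nat) : tm := foldl (fun t n => App t (church n)) E ns.

Definition strictly_definable (k : nat) (f : seq nat -> nat) : Prop :=
  exists (s : ty) (E : tm), typing [::] E (arrows k s) /\
    forall ns : seq nat, size ns = k -> betaeta (apps E ns) (church (f ns)).

(** * Finite models: extensional typed combinatory algebras (Henkin models)
    whose domains are finite. *)
Record model := Model {
  dom : ty -> finType;
  app : forall a b, dom (Arr a b) -> dom a -> dom b;
  app_ext : forall a b (f g : dom (Arr a b)), (forall x, app f x = app g x) -> f = g;
  combK : forall a b, dom (Arr a (Arr b a));
  combK_spec : forall a b (x : dom a) (y : dom b), app (app (combK a b) x) y = x;
  combS : forall a b c, dom (Arr (Arr a (Arr b c)) (Arr (Arr a b) (Arr a c)));
  combS_spec : forall a b c (x : dom (Arr a (Arr b c))) (y : dom (Arr a b)) (z : dom a),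
      app (app (app (combS a b c) x) y) z = app (app x z) (app y z)
}.

Definition env (M : model) (G : seq ty) := forall n, n < size G -> dom M (nth O G n).

Definition env_cons (M : model) (G : seq ty) (a : ty) (x : dom M a) (r : env M G)
  : env M (a :: G) :=
  fun n => match n return n < size (a :: G) -> dom M (nth O (a :: G) n) with
           | 0 => fun _ => x
           | k.+1 => fun h => r k h
           end.

Definition env_nil (M : model) : env M [::] := fun n (h : n < 0) => False_rect _ (notF h).

Inductive denotes (M : model) : forall G, tm -> forall a, env M G -> dom M a -> Prop :=
  | den_var G n (h : n < size G) (r : env M G) :
      denotes (Var n) r (r n h)
  | den_app G t u a b (r : env M G) (f : dom M (Arr a b)) (x : dom M a) :
      denotes t r f -> denotes u r x -> denotes (App t u) r (app f x)
  | den_lam G t a b (r : env M G) (f : dom M (Arr a b)) :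
      (forall x : dom M a, denotes t (env_cons x r) (app f x)) ->
      denotes (Lam t) r f.

Definition interp_eq (M : model) (t : tm) (a : ty) (d : dom M a) : Prop :=
  @denotes M [::] t a (env_nil M) d.

(* Since M_{omega_tau} is finite, the sequence m |-> [[rho(m)]] is the run of a finite
   automaton on unary input: its K states are the elements of M_{omega_tau}, it starts at
   [[rho(0)]] and steps by the semantic successor e |-> (fun f x => f (e f x)).  Such an
   automaton is simulated at type sigma = o -> ... -> o -> o (K arguments): state i is the
   i-th projection pi_i, a term D : sigma -> sigma satisfies D pi_i ->> pi_(delta i), so
   rho(m) D pi_(i0) ->> pi_(delta^m i0).  Applying that projection to the K candidates
   n_j f x y_0 ... y_(K-1), where n_j is n1 or n2 according to whether state j is c,
   selects the answer, and eta-contracting y_0 ... y_(K-1) leaves rho(n1) or rho(n2). *)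

From Stdlib Require Import Relations Eqdep Program.Equality.
From mathcomp Require Import all_boot zify.
(* Imported after all_boot, so that [lift] is the de Bruijn shift and not fintype's. *)

Set Implicit Arguments.
Unset Strict Implicit.
Unset Printing Implicit Defensive.

Notation red := (clos_refl_trans tm step).

Definition Lams (n : nat) (t : tm) : tm := iter n Lam t.
Definition Apps (t : tm) (us : seq tm) : tm := foldl App t us.

Fixpoint closedn (k : nat) (t : tm) : bool :=
  match t with
  | Var n => n < k
  | App a b => closedn k a && closedn k b
  | Lam a => closedn k.+1 a
  end.

Lemma lift0 t k : lift 0 k t = t.
Proof.
elim: t k => [n|a IHa b IHb|a IH] k /=; last by rewrite IH.
  by case: ifP; rewrite ?addn0.
by rewrite IHa IHb.
Qed.

Lemma lift_lift t d e c : lift d c (lift e c t) = lift (e + d) c t.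
Proof.
elim: t c => [n|a IHa b IHb|a IH] c /=; last by rewrite IH.
  by case: (leqP c n) => cn /=; [rewrite (leq_trans cn (leq_addr _ _)) addnA | rewrite leqNgt cn].
by rewrite IHa IHb.
Qed.

Lemma subst_lift v u c d k : c <= k <= c + d -> subst k v (lift d.+1 c u) = lift d c u.
Proof.
elim: u c k => [n|a IHa b IHb|a IH] c k /= /andP[ck kc].
- case: (leqP c n) => cn /=; last by rewrite (leq_trans cn ck).
  have -> : n + d.+1 < k = false by lia.
  have -> : (n + d.+1 == k) = false by lia.
  by rewrite addnS.
- by rewrite IHa ?ck ?kc // IHb ?ck ?kc.
- by rewrite IH //= ltnS ck addSn ltnS.
Qed.

Lemma lift_closed k t d c : k <= c -> closedn k t -> lift d c t = t.
Proof.
elim: t k c => [n|a IHa b IHb|a IH] k c kc /=.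
- by move=> nk; rewrite leqNgt (leq_trans nk kc).
- by move=> /andP[ca cb]; rewrite (IHa k) // (IHb k).
- by move=> ca; rewrite (IH k.+1).
Qed.

Lemma subst_closed k t u c : k <= c -> closedn k t -> subst c u t = t.
Proof.
elim: t k c => [n|a IHa b IHb|a IH] k c kc /=.
- by move=> nk; rewrite (leq_trans nk kc).
- by move=> /andP[ca cb]; rewrite (IHa k) // (IHb k).
- by move=> ca; rewrite (IH k.+1).
Qed.

Lemma closedn_Lams n k t : closedn k (Lams n t) = closedn (n + k) t.
Proof. by elim: n k => [|n IH] k //=; rewrite IH addnS. Qed.

Lemma closedn_Apps k t us : closedn k (Apps t us) = closedn k t && all (closedn k) us.
Proof. by elim: us t => [|u us IH] t /=; rewrite ?andbT // IH /= andbA. Qed.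

Lemma lift_Apps d c t us : lift d c (Apps t us) = Apps (lift d c t) (map (lift d c) us).
Proof. by elim: us t => [|v us IH] t //=; rewrite IH. Qed.

Lemma subst_Lams n k u t : subst k u (Lams n t) = Lams n (subst (n + k) u t).
Proof. by elim: n k => [|n IH] k //=; rewrite IH addnS. Qed.

Lemma subst_Apps k u t us : subst k u (Apps t us) = Apps (subst k u t) (map (subst k u) us).
Proof. by elim: us t => [|v us IH] t //=; rewrite IH. Qed.

Lemma lift_iter_App d c n f x :
  lift d c (iter n (App f) x) = iter n (App (lift d c f)) (lift d c x).
Proof. by elim: n => //= n ->. Qed.

Lemma subst_iter_App k u n f x :
  subst k u (iter n (App f) x) = iter n (App (subst k u f)) (subst k u x).
Proof. by elim: n => //= n ->. Qed.

Lemma subst_Var_eq k u : subst k u (Var k) = lift k 0 u.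
Proof. by rewrite /= ltnn eqxx. Qed.

Lemma subst_Var_lt k u n : n < k -> subst k u (Var n) = Var n.
Proof. by move=> /= ->. Qed.

Lemma closed_church n : closedn 0 (church n).
Proof. by rewrite /church /=; elim: n => //= n ->. Qed.

Lemma lift_church d c n : lift d c (church n) = church n.
Proof. exact: lift_closed (closed_church n). Qed.

Lemma subst_church k u n : subst k u (church n) = church n.
Proof. exact: subst_closed (closed_church n). Qed.

Lemma red_congr (F : tm -> tm) :
  (forall a b, step a b -> step (F a) (F b)) -> forall a b, red a b -> red (F a) (F b).
Proof.
move=> F_step a b; elim=> [x y sxy | x | x y z _ IHxy _ IHyz].
- exact/rt_step/F_step.
- exact: rt_refl.
- exact: rt_trans IHyz.
Qed.

Lemma red_appl u a b : red a b -> red (App a u) (App b u).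
Proof. by apply: (red_congr (F := App^~ u)) => ? ? /step_appl. Qed.

Lemma red_appr u a b : red a b -> red (App u a) (App u b).
Proof. by apply: (red_congr (F := App u)) => ? ? /step_appr. Qed.

Lemma red_Lams n a b : red a b -> red (Lams n a) (Lams n b).
Proof. by apply: (red_congr (F := Lams n)) => ? ?; elim: n => //= n IH /IH /step_lam. Qed.

Lemma red_Apps us a b : red a b -> red (Apps a us) (Apps b us).
Proof. by elim: us a b => //= u us IH a b /(red_appl u)/IH. Qed.

Lemma red_beta t u : red (App (Lam t) u) (subst 0 u t).
Proof. exact/rt_step/step_beta. Qed.

Lemma red_betaeta a b : red a b -> betaeta a b.
Proof.
elim=> [x y sxy | x | x y z _ IHxy _ IHyz].
- exact: rst_step.
- exact: rst_refl.
- exact: rst_trans IHyz.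
Qed.

Lemma red_church n f x : red (App (App (church n) f) x) (iter n (App f) x).
Proof.
apply: rt_trans; first exact/red_appl/red_beta.
rewrite /= subst_iter_App /=.
apply: rt_trans; first exact: red_beta.
by rewrite subst_iter_App /= (@subst_lift x f 0 0 0) // !lift0; exact: rt_refl.
Qed.

Lemma red_Lams_const K us u : size us = K -> red (Apps (Lams K (lift K 0 u)) us) u.
Proof.
elim: K us => [|K IH] [|v us] //= size_us; first by rewrite lift0; exact: rt_refl.
apply: rt_trans; first exact/red_Apps/red_beta.
by rewrite subst_Lams addn0 (@subst_lift v u 0 K K) ?leqnn //; apply: IH; case: size_us.
Qed.

(* [proj K i] is [fun y_0 ... y_(K-1) => y_i] and [vars K] is [[:: y_0; ...; y_(K-1)]]
   under those binders: in de Bruijn notation y_i is [Var (K.-1 - i)]. *)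
Definition proj (K i : nat) : tm := Lams K (Var (K.-1 - i)).

Definition vars (K : nat) : seq tm := mkseq (fun i => Var (K.-1 - i)) K.

Lemma closed_proj K i : i < K -> closedn 0 (proj K i).
Proof. by rewrite /proj closedn_Lams /=; lia. Qed.

Lemma red_proj K us i : size us = K -> i < K -> red (Apps (proj K i) us) (nth (Var 0) us i).
Proof.
elim: K us i => [|K IH] [|u us] i //= size_us lt_iK.
apply: rt_trans; first exact/red_Apps/red_beta.
rewrite subst_Lams addn0; case: i lt_iK => [|i] lt_iK.
  by rewrite subn0 /= ltnn eqxx; apply: red_Lams_const; case: size_us.
have -> : subst K u (Var (K - i.+1)) = Var (K.-1 - i) by rewrite /= ifT; [congr Var | ]; lia.
by apply: IH; [case: size_us | lia].
Qed.

Lemma varsS K : vars K.+1 = rcons (map (lift 1 0) (vars K)) (Var 0).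
Proof.
rewrite /vars mkseqS /= subnn; congr rcons.
rewrite /mkseq -map_comp; apply/eq_in_map => i; rewrite mem_iota /= => lt_iK.
congr Var; lia.
Qed.

Lemma red_eta_Lams K t : red (Lams K (Apps (lift K 0 t) (vars K))) t.
Proof.
elim: K => [|K IH]; first by rewrite /= lift0; exact: rt_refl.
rewrite /Lams iterSr varsS /Apps foldl_rcons -/(Apps _ _) -addn1 -lift_lift -lift_Apps.
apply: rt_trans IH; exact/red_Lams/rt_step/step_eta.
Qed.

Lemma red_beta_Lams k t u : red (App (Lams k.+1 t) u) (Lams k (subst k u t)).
Proof. by rewrite -[in subst k](addn0 k) -subst_Lams; exact: red_beta. Qed.

Lemma typing_weaken G G' t a : typing G t a -> typing (G ++ G') t a.
Proof.
elim=> {G t a} [G n lt_nG | G t u a b _ IHt _ IHu | G t a b _ IH].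
- have -> : nth O G n = nth O (G ++ G') n by rewrite nth_cat lt_nG.
  by apply: ty_var; rewrite size_cat ltn_addr.
- exact: ty_app IHt IHu.
- exact: ty_lam IH.
Qed.

Lemma typing_Lams K G t b :
  typing (nseq K O ++ G) t b -> typing G (Lams K t) (iter K (Arr O) b).
Proof.
elim: K G => [|K IH] G //= tyt; apply/ty_lam/IH.
by rewrite -cat1s catA -(nseqD K 1) addn1.
Qed.

Lemma typing_Apps_mkseq G t f K b : (forall i, i < K -> typing G (f i) O) ->
  typing G t (iter K (Arr O) b) -> typing G (Apps t (mkseq f K)) b.
Proof.
elim: K b => [|K IH] b tyf tyt; first exact: tyt.
rewrite mkseqS /Apps foldl_rcons; apply: (ty_app (a := O)); last exact: tyf.
by apply: IH => [i lt_iK|]; [apply: tyf; exact: ltnW | rewrite -iterSr].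
Qed.

Lemma typing_bound_var K G j : j < K -> typing (nseq K O ++ G) (Var j) O.
Proof.
move=> lt_jK; have {2}-> : O = nth O (nseq K O ++ G) j.
  by rewrite nth_cat size_nseq lt_jK nth_nseq lt_jK.
by apply: ty_var; rewrite size_cat size_nseq ltn_addr.
Qed.

Lemma typing_free_var K G j : j < size G -> typing (nseq K O ++ G) (Var (K + j)) (nth O G j).
Proof.
move=> lt_jG; have -> : nth O G j = nth O (nseq K O ++ G) (K + j).
  by rewrite nth_cat size_nseq ltnNge leq_addr /= addKn.
by apply: ty_var; rewrite size_cat size_nseq ltn_add2l.
Qed.

Section UnaryAutomaton.

Variables (K : nat) (delta : nat -> nat) (i0 : nat) (acc : nat -> bool).
Hypothesis delta_lt : forall j, j < K -> delta j < K.
Hypothesis i0_lt : i0 < K.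

Definition sel_ty : ty := iter K (Arr O) O.

Definition delta_tm : tm :=
  Lam (Lams K (Apps (Var K) (mkseq (fun j => Var (K.-1 - delta j)) K))).

Definition branch (N1 N2 : tm) (j : nat) : tm :=
  Apps (App (App (if acc j then N1 else N2) (Var (K + 1))) (Var K)) (vars K).

Definition run (Mt N1 N2 : tm) : tm :=
  Apps (App (App Mt delta_tm) (proj K i0)) (mkseq (branch N1 N2) K).

(* [fun m n1 n2 f x y_0 ... y_(K-1) => m delta_tm (proj K i0) (branch 0) ... (branch (K-1))],
   where [branch j] is [n f x y_0 ... y_(K-1)], [n] being [n1] or [n2] according to [acc j]. *)
Definition automaton_tm : tm :=
  Lams 5 (Lams K (run (Var (K + 4)) (Var (K + 3)) (Var (K + 2)))).

Lemma K_gt0 : 0 < K.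
Proof. exact: leq_ltn_trans i0_lt. Qed.

Lemma closed_delta_tm : closedn 0 delta_tm.
Proof.
rewrite /delta_tm /= closedn_Lams closedn_Apps /= addn1 ltnSn /= all_map.
by apply/allP => j _ /=; have := K_gt0; lia.
Qed.

Lemma red_delta_tm i : i < K -> red (App delta_tm (proj K i)) (proj K (delta i)).
Proof.
move=> lt_iK; apply: rt_trans; first exact: red_beta.
rewrite subst_Lams subst_Apps addn0 /= ltnn eqxx (lift_closed _ _ (closed_proj lt_iK)) //.
apply: red_Lams.
have -> : map (subst K (proj K i)) (mkseq (fun j => Var (K.-1 - delta j)) K) =
          mkseq (fun j => Var (K.-1 - delta j)) K.
  by rewrite -map_comp; apply: eq_map => j /=; rewrite ifT //; have := K_gt0; lia.
rewrite -(nth_mkseq (Var 0) (fun j => Var (K.-1 - delta j)) lt_iK).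
by apply: red_proj; rewrite ?size_mkseq.
Qed.

Lemma iter_delta_lt m i : i < K -> iter m delta i < K.
Proof. by move=> lt_iK; elim: m => //= m /delta_lt. Qed.

Lemma red_iter_delta_tm m i :
  i < K -> red (iter m (App delta_tm) (proj K i)) (proj K (iter m delta i)).
Proof.
move=> lt_iK; elim: m => [|m IH] /=; first exact: rt_refl.
apply: rt_trans (red_appr _ IH) _; exact/red_delta_tm/iter_delta_lt.
Qed.

Lemma subst_run k u Mt N1 N2 : K + 1 < k ->
  subst k u (run Mt N1 N2) = run (subst k u Mt) (subst k u N1) (subst k u N2).
Proof.
move=> lt_Kk; rewrite /run subst_Apps.
change (subst k u (App (App Mt delta_tm) (proj K i0)))
  with (App (App (subst k u Mt) (subst k u delta_tm)) (subst k u (proj K i0))).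
rewrite (subst_closed _ _ closed_delta_tm) // (subst_closed _ _ (closed_proj i0_lt)) //.
congr Apps; rewrite -map_comp; apply: eq_map => j /=.
have lt_K_k : K < k by lia.
rewrite /branch subst_Apps /= lt_Kk lt_K_k.
have -> : map (subst k u) (vars K) = vars K.
  by rewrite -map_comp; apply: eq_map => i /=; rewrite ifT //; lia.
by case: (acc j).
Qed.

Lemma red_automaton_tm_apps m n1 n2 :
  red (apps automaton_tm [:: m; n1; n2])
      (Lams 2 (Lams K (run (church m) (church n1) (church n2)))).
Proof.
rewrite /apps /=.
apply: rt_trans; first exact/red_appl/red_appl/red_beta_Lams.
rewrite subst_Lams subst_run ?subst_Var_eq ?subst_Var_lt ?lift_church; try lia.
apply: rt_trans; first exact/red_appl/red_beta_Lams.
rewrite subst_Lams subst_run ?subst_Var_eq ?subst_Var_lt ?lift_church ?subst_church; try lia.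
apply: rt_trans; first exact: red_beta_Lams.
rewrite subst_Lams subst_run ?subst_Var_eq ?lift_church ?subst_church; try lia.
exact: rt_refl.
Qed.

Lemma red_run m n1 n2 (n := if acc (iter m delta i0) then n1 else n2) :
  red (run (church m) (church n1) (church n2))
      (Apps (lift K 0 (iter n (App (Var 1)) (Var 0))) (vars K)).
Proof.
have lt_sK := iter_delta_lt m i0_lt.
apply: rt_trans; first exact/red_Apps/red_church.
apply: rt_trans; first exact/red_Apps/red_iter_delta_tm.
apply: rt_trans; first by apply: red_proj lt_sK; rewrite size_mkseq.
rewrite nth_mkseq // /branch -fun_if lift_iter_App /= addnC add0n.
exact/red_Apps/red_church.
Qed.

Lemma red_automaton_tm m n1 n2 :
  red (apps automaton_tm [:: m; n1; n2]) (church (if acc (iter m delta i0) then n1 else n2)).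
Proof.
apply: rt_trans (red_automaton_tm_apps m n1 n2) _; apply: (red_Lams 2).
exact: rt_trans (red_Lams K (red_run m n1 n2)) (red_eta_Lams _ _).
Qed.

Lemma typing_proj i : i < K -> typing [::] (proj K i) sel_ty.
Proof. by move=> lt_iK; apply: typing_Lams; apply: typing_bound_var; lia. Qed.

Lemma typing_delta_tm : typing [::] delta_tm (Arr sel_ty sel_ty).
Proof.
apply/ty_lam/typing_Lams/typing_Apps_mkseq => [j _|].
  by apply: typing_bound_var; have := K_gt0; lia.
by have := @typing_free_var K [:: sel_ty] 0 isT; rewrite addn0.
Qed.

Lemma typing_automaton_tm : typing [::] automaton_tm (arrows 3 sel_ty).
Proof.
set G := [:: sel_ty; Arr sel_ty sel_ty; omega sel_ty; omega sel_ty; omega sel_ty].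
have ty_free j : j < 5 -> typing (nseq K O ++ G) (Var (K + j)) (nth O G j).
  exact: (@typing_free_var K G j).
do 5 apply: ty_lam; apply/typing_Lams/typing_Apps_mkseq => [j _|].
  apply: typing_Apps_mkseq => [i lt_iK|]; first by apply: typing_bound_var; lia.
  have := ty_free 0 isT; rewrite addn0 => ty_x.
  by apply: ty_app ty_x; apply: ty_app (ty_free 1 isT); case: (acc j); apply: ty_free.
apply: ty_app (typing_weaken _ (typing_proj i0_lt)).
exact: ty_app (ty_free 4 isT) (typing_weaken _ typing_delta_tm).
Qed.

Theorem automaton_strictly_definable (f : seq nat -> nat) :
  (forall m n1 n2, f [:: m; n1; n2] = if acc (iter m delta i0) then n1 else n2) ->
  strictly_definable 3 f.
Proof.
move=> f_acc; exists sel_ty, automaton_tm; split; first exact: typing_automaton_tm.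
case=> [|m [|n1 [|n2 []]]] // _.
by rewrite f_acc; apply/red_betaeta/red_automaton_tm.
Qed.

End UnaryAutomaton.

Section NumeralDenotation.

Variables (M : model) (t : ty).

Definition idM : dom M (Arr t t) :=
  app (app (combS M t (Arr t t) t) (combK M t (Arr t t))) (combK M t t).

Lemma idM_spec x : app idM x = x.
Proof. by rewrite /idM combS_spec !combK_spec. Qed.

Definition zeroM : dom M (omega t) := app (combK M (Arr t t) (Arr t t)) idM.

Lemma zeroM_spec f x : app (app zeroM f) x = x.
Proof. by rewrite /zeroM combK_spec idM_spec. Qed.

(* [succM e = S (S (K S) K) e], the combinator form of [fun f x => f (e f x)]. *)
Definition succM (e : dom M (omega t)) : dom M (omega t) :=
  app (app (combS M (Arr t t) (Arr t t) (Arr t t))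
           (app (app (combS M (Arr t t) (Arr t (Arr t t)) (Arr (Arr t t) (Arr t t)))
                     (app (combK M (Arr (Arr t (Arr t t)) (Arr (Arr t t) (Arr t t))) (Arr t t))
                          (combS M t t t)))
                (combK M (Arr t t) t)))
      e.

Lemma succM_spec e f x : app (app (succM e) f) x = app f (app (app e f) x).
Proof. by rewrite /succM combS_spec combS_spec combK_spec combS_spec !combK_spec. Qed.

Definition numM (m : nat) : dom M (omega t) := iter m succM zeroM.

Lemma numM_spec m f x : app (app (numM m) f) x = iter m (app f) x.
Proof. by elim: m x => [|m IH] x /=; rewrite ?zeroM_spec // succM_spec IH. Qed.

Lemma denotes_iter_App G m (r : env M [:: t, Arr t t & G]) :
  denotes (iter m (App (Var 1)) (Var 0)) r (iter m (app (r 1 isT)) (r 0 isT)).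
Proof.
elim: m => [|m IH] /=; first exact: (@den_var M [:: t, Arr t t & G] 0 isT r).
exact: den_app (@den_var M [:: t, Arr t t & G] 1 isT r) IH.
Qed.

Lemma denotes_iter_App_inv G m (r : env M [:: t, Arr t t & G]) d :
  denotes (iter m (App (Var 1)) (Var 0)) r d -> d = iter m (app (r 1 isT)) (r 0 isT).
Proof.
elim: m d => [|m IH] d /= den_d.
  inversion den_d;
    repeat match goal with E : existT _ _ _ = existT _ _ _ |- _ => apply inj_pair2 in E end.
  by subst; rewrite (eq_irrelevance h isT).
dependent destruction den_d; dependent destruction den_d1.
by rewrite (IH _ den_d2) (eq_irrelevance h isT).
Qed.

Lemma denotes_Lam_inv G u a b (r : env M G) (f : dom M (Arr a b)) :
  denotes (Lam u) r f -> forall x, denotes u (env_cons x r) (app f x).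
Proof. by move=> den_f; dependent destruction den_f. Qed.

Lemma interp_church m c : interp_eq (church m) c <-> c = numM m.
Proof.
split=> [den_c | ->].
  apply: app_ext => f; apply: app_ext => x; rewrite numM_spec.
  exact: denotes_iter_App_inv (denotes_Lam_inv (denotes_Lam_inv den_c f) x).
apply: den_lam => f; apply: den_lam => x; rewrite numM_spec.
exact: (denotes_iter_App m (env_cons x (env_cons f (env_nil M)))).
Qed.

End NumeralDenotation.

Theorem lemma2 (M : model) (tau : ty) (c : dom M (omega tau))
    (h : seq nat -> nat) :
  (forall m n1 n2 : nat,
      (interp_eq (church m) c -> h [:: m; n1; n2] = n1) /\
      (~ interp_eq (church m) c -> h [:: m; n1; n2] = n2)) ->
  strictly_definable 3 h.
Proof.
move=> h_spec.
pose e := enum (dom M (omega tau)).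
have index_lt x : index x e < size e by rewrite index_mem mem_enum.
pose delta j := index (succM (nth c e j)) e.
pose i0 := index (numM M tau 0) e.
have iter_delta m : iter m delta i0 = index (numM M tau m) e.
  by elim: m => //= m ->; rewrite /delta nth_index ?mem_enum.
apply: (@automaton_strictly_definable (size e) delta i0 (fun j => nth c e j == c)).
- by move=> j _; apply: index_lt.
- exact: index_lt.
move=> m n1 n2; have [h_den h_not_den] := h_spec m n1 n2.
rewrite iter_delta nth_index ?mem_enum //; case: eqP => [num_c | num_neq_c].
  by apply: h_den; apply/interp_church.
by apply: h_not_den => /interp_church c_num; apply: num_neq_c.
Qed.
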